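(* Let $m_1,m_3,m_4\in\mathbb{R}$ and let $\mathfrak g$ be the real linear span of $E_1=\begin{pmatrix} -2m_1&m_3-im_4&im_1^2&1\\0&0&0&0\\4i&0&2m_1&0\\0&0&0&0\end{pmatrix}$, $E_2=\begin{pmatrix}0&0&0&i\\0&0&0&0\\0&0&0&0\\0&0&0&0\end{pmatrix}$, $E_3=\begin{pmatrix}\frac32 m_3&-m_1&\frac{i}{4}m_1m_3&0\\0&m_3&0&1\\0&2i&2m_3&0\\0&0&0&0\end{pmatrix}$, $E_4=\begin{pmatrix}\frac32 m_4&im_1&\frac{i}{4}m_1m_4&0\\0&m_4&0&i\\0&2&2m_4&0\\0&0&0&0\end{pmatrix}$, $E_5=\begin{pmatrix}0&0&0&0\\0&0&0&0\\0&0&0&1\\0&0&0&0\end{pmatrix}$. Then every integral variety of type $(1/2,0)$ related to $\mathfrak g$ is affinely equivalent to (an open piece of) one of the hypersurfaces 1) $v=2x_1^2+|z_2|^2$; 2) $v=\dfrac{x_1^2}{1-x_2}+2|z_2|^2$.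
   Context: Coordinates in $\mathbb{C}^3$ are $z_1=x_1+iy_1$, $z_2=x_2+iy_2$, $w=u+iv$, $z=(z_1,z_2)$. To a complex $4\times4$ matrix $\begin{pmatrix}a_1&a_2&a_3&p\\ b_1&b_2&b_3&s\\ c_1&c_2&c_3&q\\0&0&0&0\end{pmatrix}$ one associates the holomorphic affine vector field $Z=(a_1z_1+a_2z_2+a_3w+p)\frac{\partial}{\partial z_1}+(b_1z_1+b_2z_2+b_3w+s)\frac{\partial}{\partial z_2}+(c_1z_1+c_2z_2+c_3w+q)\frac{\partial}{\partial w}$. For a real linear span $\mathfrak g$ of such matrices, an integral variety of type $(1/2,0)$ related to $\mathfrak g$ is a real-analytic strictly pseudoconvex real hypersurface $M$ defined near $0\in\mathbb{C}^3$, with $0\in M$, given near $0$ by an equation $v=|z_1|^2+|z_2|^2+\frac12(z_1^2+\bar z_1^2)+\sum_{k+l+2m\ge 3}F_{klm}(z,\bar z)u^m$ (with $F_{klm}$ a polynomial of degree $k$ in $z$ and $l$ in $\bar z$, the right-hand side real), such that for every $Z\in\mathfrak g$ the real vector field $Z+\bar Z$ is tangent to $M$, i.e. $\mathrm{Re}(Z(\Phi))|_M=0$ for a defining function $\Phi$ of $M$. Two hypersurfaces are affinely equivalent if a complex affine transformation of $\mathbb{C}^3$ maps a neighbourhood in one onto an open piece of the other. *)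

From Stdlib Require Import Reals Lra.
From Coquelicot Require Import Coquelicot.

Open Scope R_scope.

(* Points of C^3 = {(z1, z2, w)}, z1 = x1+i y1, z2 = x2+i y2, w = u+i v. *)
Record C3 := mkC3 { z1c : C ; z2c : C ; wc : C }.

Record R5 := mkR5 { r5x1 : R ; r5y1 : R ; r5x2 : R ; r5y2 : R ; r5u : R }.
Record R6 := mkR6 { r6x1 : R ; r6y1 : R ; r6x2 : R ; r6y2 : R ; r6u : R ; r6v : R }.

Definition C3_of_R6 (p : R6) : C3 :=
  mkC3 (r6x1 p, r6y1 p) (r6x2 p, r6y2 p) (r6u p, r6v p).

(* replace the k-th real coordinate (k = 0..5 in the order x1,y1,x2,y2,u,v) *)
Definition upd6 (p : R6) (k : nat) (t : R) : R6 :=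
  match k with
  | 0%nat => mkR6 t (r6y1 p) (r6x2 p) (r6y2 p) (r6u p) (r6v p)
  | 1%nat => mkR6 (r6x1 p) t (r6x2 p) (r6y2 p) (r6u p) (r6v p)
  | 2%nat => mkR6 (r6x1 p) (r6y1 p) t (r6y2 p) (r6u p) (r6v p)
  | 3%nat => mkR6 (r6x1 p) (r6y1 p) (r6x2 p) t (r6u p) (r6v p)
  | 4%nat => mkR6 (r6x1 p) (r6y1 p) (r6x2 p) (r6y2 p) t (r6v p)
  | _ => mkR6 (r6x1 p) (r6y1 p) (r6x2 p) (r6y2 p) (r6u p) t
  end.

Definition coord6 (p : R6) (k : nat) : R :=
  match k with
  | 0%nat => r6x1 p | 1%nat => r6y1 p | 2%nat => r6x2 p
  | 3%nat => r6y2 p | 4%nat => r6u p | _ => r6v p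
  end.

Definition partial6 (Phi : R6 -> R) (k : nat) (p : R6) : R :=
  Derive (fun t => Phi (upd6 p k t)) (coord6 p k).

(* Wirtinger derivative d/d zeta_j = 1/2 (d/dx_j - i d/dy_j), with
   zeta_0 = z1 (x1,y1), zeta_1 = z2 (x2,y2), zeta_2 = w (u,v). *)
Definition dzeta (Phi : R6 -> R) (j : nat) (p : R6) : C :=
  (RtoC (1/2) * (RtoC (partial6 Phi (2*j) p) - Ci * RtoC (partial6 Phi (2*j+1) p)))%C.

(* Complex 4x4 matrices (entries indexed by 0..3) and the associated
   holomorphic affine vector fields. *)
Definition cmat := nat -> nat -> C.

Definition vf (A : cmat) (zeta : C3) (j : nat) : C :=
  (A j 0%nat * z1c zeta + A j 1%nat * z2c zeta + A j 2%nat * wc zeta + A j 3%nat)%C.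

Definition vf_apply (A : cmat) (Phi : R6 -> R) (p : R6) : C :=
  (vf A (C3_of_R6 p) 0 * dzeta Phi 0 p
   + vf A (C3_of_R6 p) 1 * dzeta Phi 1 p
   + vf A (C3_of_R6 p) 2 * dzeta Phi 2 p)%C.

Definition mat_scale (t : R) (A : cmat) : cmat := fun i j => (RtoC t * A i j)%C.
Definition mat_add (A B : cmat) : cmat := fun i j => (A i j + B i j)%C.

Definition E1 (m1 m3 m4 : R) : cmat := fun i j =>
  match i, j with
  | 0%nat, 0%nat => RtoC (-2 * m1)
  | 0%nat, 1%nat => (RtoC m3 - Ci * RtoC m4)%C
  | 0%nat, 2%nat => (Ci * RtoC (m1 ^ 2))%C
  | 0%nat, 3%nat => RtoC 1
  | 2%nat, 0%nat => (RtoC 4 * Ci)%C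
  | 2%nat, 2%nat => RtoC (2 * m1)
  | _, _ => RtoC 0
  end.

Definition E2 : cmat := fun i j =>
  match i, j with
  | 0%nat, 3%nat => Ci
  | _, _ => RtoC 0
  end.

Definition E3 (m1 m3 : R) : cmat := fun i j =>
  match i, j with
  | 0%nat, 0%nat => RtoC (3 / 2 * m3)
  | 0%nat, 1%nat => RtoC (- m1)
  | 0%nat, 2%nat => (Ci / RtoC 4 * RtoC (m1 * m3))%C
  | 1%nat, 1%nat => RtoC m3
  | 1%nat, 3%nat => RtoC 1
  | 2%nat, 1%nat => (RtoC 2 * Ci)%C
  | 2%nat, 2%nat => RtoC (2 * m3)
  | _, _ => RtoC 0
  end.

Definition E4 (m1 m4 : R) : cmat := fun i j =>
  match i, j with
  | 0%nat, 0%nat => RtoC (3 / 2 * m4)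
  | 0%nat, 1%nat => (Ci * RtoC m1)%C
  | 0%nat, 2%nat => (Ci / RtoC 4 * RtoC (m1 * m4))%C
  | 1%nat, 1%nat => RtoC m4
  | 1%nat, 3%nat => Ci
  | 2%nat, 1%nat => RtoC 2
  | 2%nat, 2%nat => RtoC (2 * m4)
  | _, _ => RtoC 0
  end.

Definition E5 : cmat := fun i j =>
  match i, j with
  | 2%nat, 3%nat => RtoC 1
  | _, _ => RtoC 0
  end.

Definition g_elt (m1 m3 m4 t1 t2 t3 t4 t5 : R) : cmat :=
  mat_add (mat_scale t1 (E1 m1 m3 m4))
  (mat_add (mat_scale t2 E2)
  (mat_add (mat_scale t3 (E3 m1 m3))
  (mat_add (mat_scale t4 (E4 m1 m4)) (mat_scale t5 E5)))).

(* Real power series in the 5 real variables (x1,y1,x2,y2,u). *)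
Definition coeffs := nat -> nat -> nat -> nat -> nat -> R.

Definition monom (a1 a2 a3 a4 a5 : nat) (p : R5) : R :=
  r5x1 p ^ a1 * r5y1 p ^ a2 * r5x2 p ^ a3 * r5y2 p ^ a4 * r5u p ^ a5.

Definition sum_deg (f : nat -> nat -> nat -> nat -> nat -> R) (n : nat) : R :=
  sum_n (fun a1 => sum_n (fun a2 => sum_n (fun a3 => sum_n (fun a4 =>
    if (a1 + a2 + a3 + a4 <=? n)%nat
    then f a1 a2 a3 a4 (n - (a1 + a2 + a3 + a4))%nat else 0) n) n) n) n.

Definition in_polydisc (r : R) (p : R5) : Prop :=
  Rabs (r5x1 p) < r /\ Rabs (r5y1 p) < r /\ Rabs (r5x2 p) < r /\
  Rabs (r5y2 p) < r /\ Rabs (r5u p) < r.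

Definition power_series_on (c : coeffs) (r : R) (F : R5 -> R) : Prop :=
  forall p, in_polydisc r p ->
    ex_series (sum_deg (fun a1 a2 a3 a4 a5 => Rabs (c a1 a2 a3 a4 a5 * monom a1 a2 a3 a4 a5 p))) /\
    is_series (sum_deg (fun a1 a2 a3 a4 a5 => c a1 a2 a3 a4 a5 * monom a1 a2 a3 a4 a5 p)) (F p).

(* Normalization: v = |z1|^2 + |z2|^2 + 1/2 (z1^2 + conj z1^2) + (terms of
   weight k+l+2m >= 3), i.e. v = 2 x1^2 + x2^2 + y2^2 + (weight >= 3), where
   x's and y's have weight 1 and u has weight 2. *)
Definition normal_coeff (a1 a2 a3 a4 a5 : nat) : R :=
  match a1, a2, a3, a4, a5 with
  | 2%nat, 0%nat, 0%nat, 0%nat, 0%nat => 2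
  | 0%nat, 0%nat, 2%nat, 0%nat, 0%nat => 1
  | 0%nat, 0%nat, 0%nat, 2%nat, 0%nat => 1
  | _, _, _, _, _ => 0
  end.

Definition normalized (c : coeffs) : Prop :=
  forall a1 a2 a3 a4 a5, (a1 + a2 + a3 + a4 + 2 * a5 <= 2)%nat ->
    c a1 a2 a3 a4 a5 = normal_coeff a1 a2 a3 a4 a5.

Definition base (p : R6) : R5 := mkR5 (r6x1 p) (r6y1 p) (r6x2 p) (r6y2 p) (r6u p).

Definition defn (F : R5 -> R) : R6 -> R := fun p => F (base p) - r6v p.

Definition graph_pt (F : R5 -> R) (q : R5) : R6 :=
  mkR6 (r5x1 q) (r5y1 q) (r5x2 q) (r5y2 q) (r5u q) (F q).

(* The hypersurface M (a representative of the germ at 0) *)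
Definition hyp (F : R5 -> R) (r : R) : C3 -> Prop :=
  fun zeta => exists q, in_polydisc r q /\ zeta = C3_of_R6 (graph_pt F q).

(* Integral variety of type (1/2,0) related to g = span_R(E1,...,E5):
   M = {v = F(x1,y1,x2,y2,u)} over the polydisc of radius r, with F
   real-analytic (convergent power series) in the normal form above, and
   Re(Z(Phi)) = 0 on M for every Z in g. *)
Definition integral_variety (m1 m3 m4 : R) (F : R5 -> R) (r : R) : Prop :=
  0 < r /\
  (exists c : coeffs, power_series_on c r F /\ normalized c) /\
  (forall t1 t2 t3 t4 t5 : R, forall q : R5, in_polydisc r q ->
     Re (vf_apply (g_elt m1 m3 m4 t1 t2 t3 t4 t5) (defn F) (graph_pt F q)) = 0).

Definition dist3 (a b : C3) : R :=
  Rmax (Cmod (z1c a - z1c b)%C) (Rmax (Cmod (z2c a - z2c b)%C) (Cmod (wc a - wc b)%C)).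

Definition open3 (U : C3 -> Prop) : Prop :=
  forall a, U a -> exists e, 0 < e /\ forall b, dist3 a b < e -> U b.

Definition C3_zero : C3 := mkC3 (RtoC 0) (RtoC 0) (RtoC 0).

Definition complex_affine (T : C3 -> C3) : Prop :=
  (exists (L : nat -> nat -> C) (b : nat -> C), forall zeta,
     T zeta = mkC3
       (L 0 0 * z1c zeta + L 0 1 * z2c zeta + L 0 2 * wc zeta + b 0)%C
       (L 1 0 * z1c zeta + L 1 1 * z2c zeta + L 1 2 * wc zeta + b 1)%C
       (L 2 0 * z1c zeta + L 2 1 * z2c zeta + L 2 2 * wc zeta + b 2)%C)%nat /\
  (exists T' : C3 -> C3, (forall zeta, T' (T zeta) = zeta) /\ (forall zeta, T (T' zeta) = zeta)).

Definition affinely_equiv_germ (M S : C3 -> Prop) : Prop :=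
  exists T W V, complex_affine T /\ open3 W /\ W C3_zero /\ open3 V /\
    forall eta, (exists zeta, M zeta /\ W zeta /\ eta = T zeta) <-> (S eta /\ V eta).

Definition model1 : C3 -> Prop := fun zeta =>
  Im (wc zeta) = 2 * Re (z1c zeta) ^ 2 + Cmod (z2c zeta) ^ 2.

Definition model2 : C3 -> Prop := fun zeta =>
  Re (z2c zeta) <> 1 /\
  Im (wc zeta) = Re (z1c zeta) ^ 2 / (1 - Re (z2c zeta)) + 2 * Cmod (z2c zeta) ^ 2.

(* Write M as v = F(x1, y1, x2, y2, u) and put L = 1 + m3 x2 + m4 y2.  The tangency conditions
   for E2 and E5 say that F depends neither on y1 nor on u; those for E1, E3, E4 form a linear
   first-order system for F_x1, F_x2, F_y2.  Along its solutions the quadric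
   P = (2 x1 + m1 v)^2 + 2 L (|z2|^2 - v) satisfies dP = 3 P dL / L, so P / L^3 is constant on M,
   and it vanishes since F(0) = 0.  Near 0 the equation P = 0 has a unique small root v, so M is
   an open piece of {P = 0}, which a complex linear map sends to model 1 when m3 = m4 = 0 and to
   model 2 otherwise.  Differentiability of F along coordinate lines comes from termwise
   differentiation of its power series. *)

From Stdlib Require Import Reals Ranalysis5 Lra Lia Psatz.
From Coquelicot Require Import Coquelicot.
Open Scope R_scope.

Lemma Re_vf_apply A Phi p :
  Re (vf_apply A Phi p) = 1/2 * (
    Re (vf A (C3_of_R6 p) 0) * partial6 Phi 0 p + Im (vf A (C3_of_R6 p) 0) * partial6 Phi 1 p +
    Re (vf A (C3_of_R6 p) 1) * partial6 Phi 2 p + Im (vf A (C3_of_R6 p) 1) * partial6 Phi 3 p +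
    Re (vf A (C3_of_R6 p) 2) * partial6 Phi 4 p + Im (vf A (C3_of_R6 p) 2) * partial6 Phi 5 p).
Proof.
  unfold vf_apply, dzeta; simpl.
  destruct (vf A (C3_of_R6 p) 0) as [a b], (vf A (C3_of_R6 p) 1) as [c d],
    (vf A (C3_of_R6 p) 2) as [e f].
  unfold Cmult, Cplus, Cminus, Copp, RtoC, Ci, Re, Im; simpl. ring.
Qed.

Section GeneratorCoefficients.
Variables (m1 m3 m4 t1 t2 t3 t4 t5 x1 y1 x2 y2 u v : R).
Let A := g_elt m1 m3 m4 t1 t2 t3 t4 t5.
Let p := C3_of_R6 (mkR6 x1 y1 x2 y2 u v).

Ltac expand_vf :=
  unfold A, p, vf, g_elt, mat_add, mat_scale, E1, E2, E3, E4, E5, C3_of_R6; simpl;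
  unfold Cmult, Cplus, Cminus, Copp, Cdiv, Cinv, RtoC, Ci; simpl; f_equal; field.

Lemma vf_g_elt_z1 : vf A p 0 =
  (t1*(-2*m1*x1 + m3*x2 + m4*y2 - m1^2*v + 1) + t3*(3/2*m3*x1 - m1*x2 - m1*m3/4*v)
     + t4*(3/2*m4*x1 - m1*y2 - m1*m4/4*v),
   t1*(-2*m1*y1 + m3*y2 - m4*x2 + m1^2*u) + t2 + t3*(3/2*m3*y1 - m1*y2 + m1*m3/4*u)
     + t4*(3/2*m4*y1 + m1*x2 + m1*m4/4*u)).
Proof. expand_vf. Qed.

Lemma vf_g_elt_z2 : vf A p 1 = (t3*(m3*x2 + 1) + t4*(m4*x2), t3*(m3*y2) + t4*(m4*y2 + 1)).
Proof. expand_vf. Qed.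

Lemma vf_g_elt_w : vf A p 2 =
  (t1*(-4*y1 + 2*m1*u) + t3*(-2*y2 + 2*m3*u) + t4*(2*x2 + 2*m4*u) + t5,
   t1*(4*x1 + 2*m1*v) + t3*(2*x2 + 2*m3*v) + t4*(2*y2 + 2*m4*v)).
Proof. expand_vf. Qed.

End GeneratorCoefficients.

Lemma continuity_pt_sum_f_R0 (f : nat -> R -> R) y N :
  (forall n, continuity_pt (f n) y) -> continuity_pt (fun x => sum_f_R0 (fun n => f n x) N) y.
Proof.
  intros H; induction N as [|N IH]; simpl; [apply H | now apply continuity_pt_plus].
Qed.

Lemma CVU_Series_dominated (h : nat -> R -> R) (B : nat -> R) (c : R) (r0 : posreal) :
  ex_series B -> (forall n y, Rabs (y - c) < r0 -> Rabs (h n y) <= B n) ->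
  CVU (fun N y => sum_f_R0 (fun n => h n y) N) (fun y => Series (fun n => h n y)) c r0.
Proof.
  intros HB Hb eps Heps.
  destruct (proj1 (is_series_Reals _ _) (Series_correct _ HB) eps Heps) as [N HN].
  exists N. intros n y Hn Hy. unfold Boule in Hy.
  assert (Habs : ex_series (fun n => Rabs (h n y))).
  { apply (@ex_series_le R_AbsRing R_CompleteNormedModule _ B); [intros k | exact HB].
    change (Rabs (Rabs (h k y)) <= B k). rewrite Rabs_Rabsolu. auto. }
  rewrite (Series_incr_n _ (S n)) by (lia || now apply ex_series_Rabs); simpl pred.
  replace (_ + _ - _) with (Series (fun k => h (S n + k)%nat y)) by ring.
  apply Rle_lt_trans with (Series (fun k => B (S n + k)%nat)).
  - eapply Rle_trans; [apply Series_Rabs, (ex_series_incr_n (fun k => Rabs (h k y))), Habs |].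
    apply Series_le; [intros k; split; [apply Rabs_pos | auto] | now apply ex_series_incr_n].
  - specialize (HN n Hn). unfold R_dist in HN.
    rewrite (Series_incr_n B (S n)) in HN by (lia || exact HB); simpl pred in HN.
    replace (sum_f_R0 B n - _) with (- Series (fun k => B (S n + k)%nat)) in HN by ring.
    rewrite Rabs_Ropp in HN. eapply Rle_lt_trans; [apply Rle_abs | exact HN].
Qed.

Lemma ex_derive_Series_dominated (g g' : nat -> R -> R) (B : nat -> R) (c : R) (r0 : posreal) :
  ex_series B ->
  (forall n y, Rabs (y - c) < r0 -> is_derive (g n) y (g' n y)) ->
  (forall n y, Rabs (y - c) < r0 -> continuity_pt (g' n) y) ->
  (forall n y, Rabs (y - c) < r0 -> Rabs (g' n y) <= B n) ->
  (forall y, Rabs (y - c) < r0 -> ex_series (fun n => g n y)) ->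
  ex_derive (fun y => Series (fun n => g n y)) c.
Proof.
  intros HB Hd Hc Hb Hs.
  pose proof (CVU_Series_dominated g' B c r0 HB Hb) as Hcvu.
  exists (Series (fun n => g' n c)).
  apply is_derive_Reals.
  apply (derivable_pt_lim_CVU (fun N y => sum_f_R0 (fun n => g n y) N)
           (fun N y => sum_f_R0 (fun n => g' n y) N) _ (fun y => Series (fun n => g' n y)) c c r0).
  - unfold Boule. rewrite Rminus_eq_0, Rabs_R0. apply cond_pos.
  - intros y N Hy. apply is_derive_Reals.
    eapply is_derive_ext; [intros t; apply sum_n_Reals |].
    rewrite <- sum_n_Reals.
    apply (@is_derive_sum_n R_AbsRing R_NormedModule (fun n t => g n t)).
    intros k _. apply Hd, Hy.
  - intros y Hy. apply is_series_Reals, Series_correct, Hs, Hy.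
  - exact Hcvu.
  - intros y Hy. apply (CVU_continuity _ _ c r0 Hcvu); auto.
    intros n z Hz. apply continuity_pt_sum_f_R0. intros k. apply Hc, Hz.
Qed.

Definition fun5 := nat -> nat -> nat -> nat -> nat -> R.

Lemma sum_deg_ext (f g : fun5) n :
  (forall a1 a2 a3 a4 a5, f a1 a2 a3 a4 a5 = g a1 a2 a3 a4 a5) -> sum_deg f n = sum_deg g n.
Proof.
  intros H. unfold sum_deg.
  do 4 (apply sum_n_ext; intro). now rewrite H.
Qed.

Lemma sum_deg_le (f g : fun5) n :
  (forall a1 a2 a3 a4, (a1 + a2 + a3 + a4 <= n)%nat ->
     f a1 a2 a3 a4 (n - (a1 + a2 + a3 + a4))%nat <= g a1 a2 a3 a4 (n - (a1 + a2 + a3 + a4))%nat) ->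
  sum_deg f n <= sum_deg g n.
Proof.
  intros H. unfold sum_deg.
  apply sum_n_m_le; intros a1; apply sum_n_m_le; intros a2;
    apply sum_n_m_le; intros a3; apply sum_n_m_le; intros a4.
  destruct (Nat.leb_spec (a1 + a2 + a3 + a4) n); [now apply H | lra].
Qed.

Lemma Rabs_sum_n_le (f : nat -> R) n : Rabs (sum_n f n) <= sum_n (fun k => Rabs (f k)) n.
Proof. apply (norm_sum_n_m (K := R_AbsRing) (V := R_NormedModule)). Qed.

Lemma Rabs_sum_deg_le (f : fun5) n :
  Rabs (sum_deg f n) <= sum_deg (fun a1 a2 a3 a4 a5 => Rabs (f a1 a2 a3 a4 a5)) n.
Proof.
  unfold sum_deg.
  do 4 (eapply Rle_trans; [apply Rabs_sum_n_le | apply sum_n_m_le; intro]).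
  destruct (_ <=? n)%nat; [lra | rewrite Rabs_R0; lra].
Qed.

Lemma sum_deg_scal (K : R) (f : fun5) n :
  sum_deg (fun a1 a2 a3 a4 a5 => K * f a1 a2 a3 a4 a5) n = K * sum_deg f n.
Proof.
  unfold sum_deg.
  do 4 (rewrite <- (sum_n_mult_l (K : R_Ring)); apply sum_n_ext; intro).
  destruct (_ <=? n)%nat; [reflexivity | cbn; ring].
Qed.

Lemma is_derive_sum_deg (e : fun5) (j : nat -> nat -> nat -> nat -> nat -> nat) n t :
  is_derive (fun y => sum_deg (fun a1 a2 a3 a4 a5 => e a1 a2 a3 a4 a5 * y ^ j a1 a2 a3 a4 a5) n) t
    (sum_deg (fun a1 a2 a3 a4 a5 =>
       e a1 a2 a3 a4 a5 * (INR (j a1 a2 a3 a4 a5) * t ^ pred (j a1 a2 a3 a4 a5))) n).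
Proof.
  unfold sum_deg.
  do 4 (apply (@is_derive_sum_n R_AbsRing R_NormedModule); intros ? _).
  destruct (_ <=? n)%nat; [| apply (@is_derive_const R_AbsRing R_NormedModule)].
  apply is_derive_scal.
  rewrite <- (Rmult_1_r (INR _)) at 1.
  apply (is_derive_pow (fun y => y)), (@is_derive_id R_AbsRing).
Qed.

Definition upd5 (q : R5) (k : nat) (t : R) : R5 :=
  match k with
  | 0%nat => mkR5 t (r5y1 q) (r5x2 q) (r5y2 q) (r5u q)
  | 1%nat => mkR5 (r5x1 q) t (r5x2 q) (r5y2 q) (r5u q)
  | 2%nat => mkR5 (r5x1 q) (r5y1 q) t (r5y2 q) (r5u q)
  | 3%nat => mkR5 (r5x1 q) (r5y1 q) (r5x2 q) t (r5u q)
  | _ => mkR5 (r5x1 q) (r5y1 q) (r5x2 q) (r5y2 q) t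
  end.

Definition coord5 (q : R5) (k : nat) : R :=
  match k with
  | 0%nat => r5x1 q | 1%nat => r5y1 q | 2%nat => r5x2 q | 3%nat => r5y2 q | _ => r5u q
  end.

Definition exponent5 (a1 a2 a3 a4 a5 k : nat) : nat :=
  match k with
  | 0%nat => a1 | 1%nat => a2 | 2%nat => a3 | 3%nat => a4 | _ => a5
  end.

Definition in_cube (s : R) (q : R5) : Prop :=
  Rabs (r5x1 q) <= s /\ Rabs (r5y1 q) <= s /\ Rabs (r5x2 q) <= s /\
  Rabs (r5y2 q) <= s /\ Rabs (r5u q) <= s.

Definition cst5 (s : R) : R5 := mkR5 s s s s s.

Lemma upd5_upd5 q k t s : upd5 (upd5 q k t) k s = upd5 q k s.
Proof. now destruct k as [|[|[|[|k]]]]. Qed.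

Lemma coord5_upd5 q k t : coord5 (upd5 q k t) k = t.
Proof. now destruct k as [|[|[|[|k]]]]. Qed.

Lemma in_polydisc_upd5 r q k t : in_polydisc r q -> Rabs t < r -> in_polydisc r (upd5 q k t).
Proof.
  intros (? & ? & ? & ? & ?) Ht. destruct k as [|[|[|[|k]]]]; unfold in_polydisc; simpl; auto 6.
Qed.

Lemma in_cube_upd5 s q k t : in_cube s q -> Rabs t <= s -> in_cube s (upd5 q k t).
Proof.
  intros (? & ? & ? & ? & ?) Ht. destruct k as [|[|[|[|k]]]]; unfold in_cube; simpl; auto 6.
Qed.

Lemma in_cube_polydisc s r q : in_cube s q -> s < r -> in_polydisc r q.
Proof. intros (? & ? & ? & ? & ?) Hs. unfold in_polydisc; repeat split; lra. Qed.

Lemma in_cube_coord5 s q k : in_cube s q -> Rabs (coord5 q k) <= s.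
Proof. intros (? & ? & ? & ? & ?). now destruct k as [|[|[|[|k]]]]. Qed.

Lemma in_polydisc_in_cube r q : in_polydisc r q -> exists s, 0 <= s < r /\ in_cube s q.
Proof.
  intros (H1 & H2 & H3 & H4 & H5).
  exists (Rmax (Rabs (r5x1 q)) (Rmax (Rabs (r5y1 q)) (Rmax (Rabs (r5x2 q))
           (Rmax (Rabs (r5y2 q)) (Rabs (r5u q)))))).
  split; [split |].
  - apply Rle_trans with (1 := Rabs_pos (r5x1 q)), Rmax_l.
  - repeat apply Rmax_lub_lt; assumption.
  - unfold in_cube; repeat split;
      repeat (apply Rle_refl || apply Rmax_l || (eapply Rle_trans; [| apply Rmax_r])).
Qed.

Lemma monom_upd5 a1 a2 a3 a4 a5 q k t :
  monom a1 a2 a3 a4 a5 (upd5 q k t)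
  = monom a1 a2 a3 a4 a5 (upd5 q k 1) * t ^ exponent5 a1 a2 a3 a4 a5 k.
Proof. destruct k as [|[|[|[|k]]]]; unfold monom; simpl; rewrite pow1; ring. Qed.

Lemma monom_cst5 a1 a2 a3 a4 a5 s : monom a1 a2 a3 a4 a5 (cst5 s) = s ^ (a1 + a2 + a3 + a4 + a5).
Proof. unfold monom, cst5; simpl. rewrite !pow_add. ring. Qed.

Lemma Rabs_pow_le z b s : Rabs z <= s -> Rabs (z ^ b) <= s ^ b.
Proof. intros Hz. rewrite <- RPow_abs. apply pow_incr. split; [apply Rabs_pos | exact Hz]. Qed.

Lemma Rabs_prod4_pow_le z1 z2 z3 z4 b1 b2 b3 b4 s :
  Rabs z1 <= s -> Rabs z2 <= s -> Rabs z3 <= s -> Rabs z4 <= s ->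
  Rabs (z1 ^ b1 * z2 ^ b2 * z3 ^ b3 * z4 ^ b4) <= s ^ (b1 + b2 + b3 + b4).
Proof.
  intros H1 H2 H3 H4. rewrite !Rabs_mult, !pow_add.
  repeat apply Rmult_le_compat; try apply Rabs_pow_le; auto;
    repeat apply Rmult_le_pos; apply Rabs_pos.
Qed.

Lemma monom_bound a1 a2 a3 a4 a5 q s :
  in_cube s q -> Rabs (monom a1 a2 a3 a4 a5 q) <= s ^ (a1 + a2 + a3 + a4 + a5).
Proof.
  intros (H1 & H2 & H3 & H4 & H5). unfold monom.
  rewrite Rabs_mult, pow_add.
  apply Rmult_le_compat; try apply Rabs_pos; [apply Rabs_prod4_pow_le | apply Rabs_pow_le]; auto.
Qed.

Lemma monom_upd5_one_bound a1 a2 a3 a4 a5 q k s :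
  in_cube s q ->
  Rabs (monom a1 a2 a3 a4 a5 (upd5 q k 1))
  <= s ^ (a1 + a2 + a3 + a4 + a5 - exponent5 a1 a2 a3 a4 a5 k).
Proof.
  intros (H1 & H2 & H3 & H4 & H5).
  destruct k as [|[|[|[|k]]]]; unfold monom; simpl; rewrite pow1, ?Rmult_1_r, ?Rmult_1_l.
  - replace (_ - a1)%nat with (a2 + a3 + a4 + a5)%nat by lia. now apply Rabs_prod4_pow_le.
  - replace (_ - a2)%nat with (a1 + a3 + a4 + a5)%nat by lia. now apply Rabs_prod4_pow_le.
  - replace (_ - a3)%nat with (a1 + a2 + a4 + a5)%nat by lia. now apply Rabs_prod4_pow_le.
  - replace (_ - a4)%nat with (a1 + a2 + a3 + a5)%nat by lia. now apply Rabs_prod4_pow_le.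
  - replace (_ - a5)%nat with (a1 + a2 + a3 + a4)%nat by lia. now apply Rabs_prod4_pow_le.
Qed.

Lemma exponent5_le a1 a2 a3 a4 a5 k : (exponent5 a1 a2 a3 a4 a5 k <= a1 + a2 + a3 + a4 + a5)%nat.
Proof. destruct k as [|[|[|[|k]]]]; simpl; lia. Qed.

(* The left side is |d monom / d q_k| at (q, q_k := y); on [in_cube s] it is at most n s^(n-1). *)
Lemma dmonom_bound a1 a2 a3 a4 a5 q k y s :
  in_cube s q -> Rabs y <= s ->
  Rabs (monom a1 a2 a3 a4 a5 (upd5 q k 1))
    * (INR (exponent5 a1 a2 a3 a4 a5 k) * Rabs y ^ pred (exponent5 a1 a2 a3 a4 a5 k))
  <= INR (a1 + a2 + a3 + a4 + a5) * s ^ pred (a1 + a2 + a3 + a4 + a5).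
Proof.
  intros Hq Hy.
  assert (Hs : 0 <= s) by (eapply Rle_trans; [apply Rabs_pos | exact Hy]).
  pose proof (monom_upd5_one_bound a1 a2 a3 a4 a5 q k s Hq) as Hm.
  pose proof (exponent5_le a1 a2 a3 a4 a5 k) as Hj.
  set (j := exponent5 a1 a2 a3 a4 a5 k) in *.
  set (n := (a1 + a2 + a3 + a4 + a5)%nat) in *.
  apply Rle_trans with (s ^ (n - j) * (INR j * s ^ pred j)).
  { apply Rmult_le_compat; auto using Rabs_pos.
    - apply Rmult_le_pos; [apply pos_INR | apply pow_le, Rabs_pos].
    - apply Rmult_le_compat_l; [apply pos_INR |].
      apply pow_incr; split; [apply Rabs_pos | exact Hy]. }
  destruct j as [|j].
  - simpl. rewrite !Rmult_0_l, Rmult_0_r. apply Rmult_le_pos; [apply pos_INR | now apply pow_le].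
  - replace (pred n) with (n - S j + j)%nat by lia.
    rewrite pow_add. simpl pred.
    replace (s ^ (n - S j) * (INR (S j) * s ^ j))
      with (INR (S j) * (s ^ (n - S j) * s ^ j)) by ring.
    apply Rmult_le_compat_r; [apply Rmult_le_pos; now apply pow_le | apply le_INR; lia].
Qed.

(* Mean value bound for t^n on [a, b]. *)
Lemma INR_mul_pow_pred_le n a b : 0 <= a <= b -> INR n * a ^ pred n * (b - a) <= b ^ n.
Proof.
  intros [Ha Hab].
  assert (Q : forall m, a ^ S m + INR (S m) * a ^ m * (b - a) <= b ^ S m).
  { induction m as [|m IH]; [simpl; lra |].
    assert (HA : 0 <= a ^ m) by now apply pow_le.
    assert (0 <= INR (S m) * a ^ m * ((b - a) * (b - a)))
      by (apply Rmult_le_pos; [apply Rmult_le_pos; [apply pos_INR | exact HA] | apply Rle_0_sqr]).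
    assert (0 <= b * (b ^ S m - (a ^ S m + INR (S m) * a ^ m * (b - a))))
      by (apply Rmult_le_pos; lra).
    rewrite (S_INR (S m)). simpl in *. nra. }
  destruct n as [|m]; [simpl; lra |].
  specialize (Q m). simpl pred. assert (0 <= a ^ S m) by now apply pow_le. lra.
Qed.

Definition majorant_seq (c : coeffs) (rho : R) (n : nat) : R :=
  sum_deg (fun a1 a2 a3 a4 a5 => Rabs (c a1 a2 a3 a4 a5 * monom a1 a2 a3 a4 a5 (cst5 rho))) n.

Section PowerSeries.
Variables (c : coeffs) (r : R) (F : R5 -> R).
Hypothesis HF : power_series_on c r F.

Lemma ex_series_majorant_seq rho : 0 <= rho < r -> ex_series (majorant_seq c rho).
Proof.
  intros Hrho. apply (HF (cst5 rho)).
  unfold in_polydisc, cst5; simpl. rewrite Rabs_right by lra. repeat split; lra.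
Qed.

Lemma majorant_seq_term a1 a2 a3 a4 a5 rho : 0 <= rho ->
  Rabs (c a1 a2 a3 a4 a5 * monom a1 a2 a3 a4 a5 (cst5 rho))
  = Rabs (c a1 a2 a3 a4 a5) * rho ^ (a1 + a2 + a3 + a4 + a5).
Proof.
  intros Hrho. rewrite Rabs_mult, monom_cst5, (Rabs_right (rho ^ _)); [reflexivity |].
  apply Rle_ge, pow_le, Hrho.
Qed.

Lemma line_derivative_bound q k y s rho n :
  in_cube s q -> Rabs y <= s -> 0 <= s < rho ->
  Rabs (sum_deg (fun a1 a2 a3 a4 a5 =>
          c a1 a2 a3 a4 a5 * monom a1 a2 a3 a4 a5 (upd5 q k 1)
          * (INR (exponent5 a1 a2 a3 a4 a5 k) * y ^ pred (exponent5 a1 a2 a3 a4 a5 k))) n)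
  <= majorant_seq c rho n * / (rho - s).
Proof.
  intros Hq Hy Hs.
  eapply Rle_trans; [apply Rabs_sum_deg_le |].
  unfold majorant_seq. rewrite Rmult_comm, <- sum_deg_scal.
  apply sum_deg_le. intros a1 a2 a3 a4 Ha.
  set (a5 := (n - (a1 + a2 + a3 + a4))%nat).
  assert (Htot : (a1 + a2 + a3 + a4 + a5)%nat = n) by (unfold a5; lia).
  rewrite majorant_seq_term, Htot by lra.
  rewrite !Rabs_mult, (Rabs_right (INR _)), <- RPow_abs by apply Rle_ge, pos_INR.
  pose proof (dmonom_bound a1 a2 a3 a4 a5 q k y s Hq Hy) as Hd. rewrite Htot in Hd.
  pose proof (INR_mul_pow_pred_le n s rho ltac:(lra)) as Hb.
  assert (INR n * s ^ pred n <= rho ^ n * / (rho - s)).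
  { apply (Rmult_le_reg_r (rho - s)); [lra |].
    replace (rho ^ n * / (rho - s) * (rho - s)) with (rho ^ n) by (field; lra). lra. }
  pose proof (Rabs_pos (c a1 a2 a3 a4 a5)).
  replace (/ (rho - s) * (Rabs (c a1 a2 a3 a4 a5) * rho ^ n))
    with (Rabs (c a1 a2 a3 a4 a5) * (rho ^ n * / (rho - s))) by ring.
  rewrite !Rmult_assoc. apply Rmult_le_compat_l; lra.
Qed.

(* Differentiate termwise on [|t - q_k| < (r - s)/3], dominating by [majorant_seq] at
   radius (s + 2 r)/3. *)
Lemma power_series_ex_derive_line q k :
  in_polydisc r q -> ex_derive (fun t => F (upd5 q k t)) (coord5 q k).
Proof.
  intros Hq. destruct (in_polydisc_in_cube r q Hq) as [s [Hs Hsq]].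
  set (s1 := (2 * s + r) / 3). set (rho := (s + 2 * r) / 3).
  assert (Hr0 : 0 < s1 - s) by (unfold s1; lra).
  set (r0 := mkposreal _ Hr0).
  assert (Hq1 : in_cube s1 q).
  { destruct Hsq as (? & ? & ? & ? & ?). unfold in_cube, s1; repeat split; lra. }
  assert (Hy : forall y, Rabs (y - coord5 q k) < r0 -> Rabs y <= s1).
  { intros y Hy. pose proof (in_cube_coord5 s q k Hsq).
    pose proof (Rabs_triang (y - coord5 q k) (coord5 q k)).
    replace (y - coord5 q k + coord5 q k) with y in * by ring. simpl in Hy. lra. }
  set (g := fun n y => sum_deg (fun a1 a2 a3 a4 a5 =>
    c a1 a2 a3 a4 a5 * monom a1 a2 a3 a4 a5 (upd5 q k 1) * y ^ exponent5 a1 a2 a3 a4 a5 k) n).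
  assert (Hgs : forall y, Rabs (y - coord5 q k) < r0 ->
                 is_series (fun n => g n y) (F (upd5 q k y))).
  { intros y Hy'.
    assert (Hpd : in_polydisc r (upd5 q k y))
      by (apply in_cube_polydisc with s1; [apply in_cube_upd5; auto | unfold s1; lra]).
    eapply is_series_ext; [| exact (proj2 (HF _ Hpd))].
    intros n. apply sum_deg_ext. intros. rewrite monom_upd5. ring. }
  apply (ex_derive_ext_loc (fun y => Series (fun n => g n y))).
  { exists r0. intros t Ht. now apply is_series_unique, Hgs. }
  set (g' := fun n y => sum_deg (fun a1 a2 a3 a4 a5 =>
    c a1 a2 a3 a4 a5 * monom a1 a2 a3 a4 a5 (upd5 q k 1)
    * (INR (exponent5 a1 a2 a3 a4 a5 k) * y ^ pred (exponent5 a1 a2 a3 a4 a5 k))) n).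
  apply (ex_derive_Series_dominated g g' (fun n => majorant_seq c rho n * / (rho - s1)) _ r0).
  - apply ex_series_scal_r, ex_series_majorant_seq. unfold rho; lra.
  - intros n y _. apply (is_derive_sum_deg (fun a1 a2 a3 a4 a5 =>
      c a1 a2 a3 a4 a5 * monom a1 a2 a3 a4 a5 (upd5 q k 1))).
  - intros n y _. apply continuity_pt_filterlim, (@ex_derive_continuous R_AbsRing R_NormedModule).
    eexists. eapply is_derive_ext; [| apply (is_derive_sum_deg (fun a1 a2 a3 a4 a5 =>
      c a1 a2 a3 a4 a5 * monom a1 a2 a3 a4 a5 (upd5 q k 1) * INR (exponent5 a1 a2 a3 a4 a5 k))
      (fun a1 a2 a3 a4 a5 => pred (exponent5 a1 a2 a3 a4 a5 k)))].
    intros t. unfold g'. apply sum_deg_ext. intros. simpl. ring.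
  - intros n y Hy'. apply line_derivative_bound; auto. unfold s1, rho; lra.
  - intros y Hy'. eexists. now apply Hgs.
Qed.

Lemma normal_coeff_degree_le1 a1 a2 a3 a4 a5 :
  (a1 + a2 + a3 + a4 + a5 <= 1)%nat -> normal_coeff a1 a2 a3 a4 a5 = 0.
Proof.
  intros H. destruct a1 as [|[|]], a2 as [|[|]], a3 as [|[|]], a4 as [|[|]], a5 as [|[|]];
    simpl; reflexivity || lia.
Qed.

(* A normalized series has no terms of degree 0 or 1. *)
Lemma normalized_term_bound q s rho n :
  normalized c -> in_cube s q -> 0 <= s <= rho -> 0 < rho ->
  Rabs (sum_deg (fun a1 a2 a3 a4 a5 => c a1 a2 a3 a4 a5 * monom a1 a2 a3 a4 a5 q) n)
  <= (s / rho) ^ 2 * majorant_seq c rho n.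
Proof.
  intros Hn Hq Hs Hrho.
  eapply Rle_trans; [apply Rabs_sum_deg_le |].
  unfold majorant_seq. rewrite <- sum_deg_scal. apply sum_deg_le. intros a1 a2 a3 a4 Ha.
  set (a5 := (n - (a1 + a2 + a3 + a4))%nat).
  assert (Htot : (a1 + a2 + a3 + a4 + a5)%nat = n) by (unfold a5; lia).
  rewrite majorant_seq_term, Htot, Rabs_mult by lra.
  assert (0 <= (s / rho) ^ 2) by (apply pow2_ge_0).
  pose proof (Rabs_pos (c a1 a2 a3 a4 a5)).
  destruct (Nat.le_gt_cases n 1) as [Hn1 | Hn1].
  - rewrite Hn, normal_coeff_degree_le1, Rabs_R0 by lia.
    assert (0 <= rho ^ n) by (apply pow_le; lra). nra.
  - pose proof (monom_bound a1 a2 a3 a4 a5 q s Hq) as Hm. rewrite Htot in Hm.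
    replace n with (2 + (n - 2))%nat in Hm |- * by lia.
    rewrite pow_add in Hm |- *.
    assert (s ^ (n - 2) <= rho ^ (n - 2)) by (apply pow_incr; lra).
    assert (0 <= s ^ (n - 2)) by (apply pow_le; lra).
    replace ((s / rho) ^ 2 * (Rabs (c a1 a2 a3 a4 a5) * (rho ^ 2 * rho ^ (n - 2))))
      with (Rabs (c a1 a2 a3 a4 a5) * (s ^ 2 * rho ^ (n - 2))) by (field; lra).
    apply Rmult_le_compat_l; [lra |].
    eapply Rle_trans; [exact Hm |]. apply Rmult_le_compat_l; [apply pow2_ge_0 | lra].
Qed.

Lemma normalized_power_series_bound q s rho :
  normalized c -> in_cube s q -> 0 <= s <= rho -> 0 < rho < r ->
  Rabs (F q) <= (s / rho) ^ 2 * Series (majorant_seq c rho).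
Proof.
  intros Hn Hq Hs Hrho.
  destruct (HF q (in_cube_polydisc s r q Hq ltac:(lra))) as [_ Hser].
  assert (HM := ex_series_majorant_seq rho ltac:(lra)).
  set (S := fun n => sum_deg (fun a1 a2 a3 a4 a5 => c a1 a2 a3 a4 a5 * monom a1 a2 a3 a4 a5 q) n).
  assert (Hb : forall n, Rabs (S n) <= (s / rho) ^ 2 * majorant_seq c rho n)
    by (intros n; apply normalized_term_bound; auto; lra).
  assert (HM' : ex_series (fun n => (s / rho) ^ 2 * majorant_seq c rho n))
    by (apply (ex_series_ext (fun n => majorant_seq c rho n * (s / rho) ^ 2));
        [intros; apply Rmult_comm | now apply ex_series_scal_r]).
  rewrite <- (is_series_unique _ _ Hser), <- (Series_scal_l _ (majorant_seq c rho)). fold S.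
  eapply Rle_trans; [apply Series_Rabs |].
  - apply (@ex_series_le R_AbsRing R_CompleteNormedModule _
             (fun n => (s / rho) ^ 2 * majorant_seq c rho n)); [| exact HM'].
    intros n. change (Rabs (Rabs (S n)) <= (s / rho) ^ 2 * majorant_seq c rho n).
    rewrite Rabs_Rabsolu. apply Hb.
  - apply Series_le; [| exact HM']. intros n. split; [apply Rabs_pos | apply Hb].
Qed.

Lemma normalized_power_series_linear_bound q s rho :
  normalized c -> in_cube s q -> 0 <= s <= rho -> 0 < rho < r ->
  Rabs (F q) <= s / rho * Rabs (Series (majorant_seq c rho)).
Proof.
  intros Hn Hq Hs Hrho.
  assert (Hsr : 0 <= s / rho <= 1).
  { split; [apply Rdiv_le_0_compat; lra |].
    apply (Rmult_le_reg_r rho); [lra |]. unfold Rdiv. rewrite Rmult_assoc, Rinv_l; lra. }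
  eapply Rle_trans; [exact (normalized_power_series_bound q s rho Hn Hq Hs Hrho) |].
  apply Rle_trans with ((s / rho) ^ 2 * Rabs (Series (majorant_seq c rho)));
    [apply Rmult_le_compat_l; [apply pow2_ge_0 | apply Rle_abs] |].
  apply Rmult_le_compat_r; [apply Rabs_pos | simpl; nra].
Qed.

Lemma normalized_power_series_0 : normalized c -> 0 < r -> F (mkR5 0 0 0 0 0) = 0.
Proof.
  intros Hn Hr.
  assert (Hq : in_cube 0 (mkR5 0 0 0 0 0)) by (unfold in_cube; simpl; rewrite Rabs_R0; lra).
  pose proof (normalized_power_series_bound _ 0 (r / 2) Hn Hq ltac:(lra) ltac:(lra)) as H.
  unfold Rdiv in H. rewrite Rmult_0_l, pow_i, Rmult_0_l in H by lia.
  apply Rabs_eq_0. pose proof (Rabs_pos (F (mkR5 0 0 0 0 0))). lra.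
Qed.

End PowerSeries.

(** * The tangency conditions as a first-order system *)

Definition partial5 (F : R5 -> R) (q : R5) (k : nat) : R :=
  Derive (fun t => F (upd5 q k t)) (coord5 q k).

Lemma partial6_defn_graph F q k :
  (k < 5)%nat -> ex_derive (fun t => F (upd5 q k t)) (coord5 q k) ->
  partial6 (defn F) k (graph_pt F q) = partial5 F q k.
Proof.
  intros Hk Hd. destruct q as [x1 y1 x2 y2 u].
  destruct k as [|[|[|[|[|k]]]]]; try lia;
    unfold partial6, partial5, defn, base, upd6, graph_pt, coord6; simpl in *;
    rewrite Derive_minus, Derive_const by (exact Hd || apply ex_derive_const); ring.
Qed.

Lemma partial6_defn_graph_v F q : partial6 (defn F) 5 (graph_pt F q) = -1.
Proof.
  destruct q. unfold partial6, defn, base, upd6, graph_pt, coord6; simpl.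
  apply is_derive_unique. auto_derive; auto.
Qed.

Definition tangency_pde (m1 m3 m4 x1 x2 y2 v D0 D2 D3 : R) : Prop :=
  (1 + m3*x2 + m4*y2 - 2*m1*x1 - m1^2*v) * D0 = 4*x1 + 2*m1*v /\
  (6*m3*x1 - 4*m1*x2 - m1*m3*v) * D0 + 4*(1 + m3*x2) * D2 + 4*m3*y2 * D3 = 8*(x2 + m3*v) /\
  (6*m4*x1 - 4*m1*y2 - m1*m4*v) * D0 + 4*m4*x2 * D2 + 4*(1 + m4*y2) * D3 = 8*(y2 + m4*v).

(* E2 and E5 force F_{y1} = F_u = 0; E1, E3, E4 then give the system. *)
Lemma tangency_pde_of_tangent m1 m3 m4 F x1 y1 x2 y2 u :
  let q := mkR5 x1 y1 x2 y2 u in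
  (forall k, ex_derive (fun t => F (upd5 q k t)) (coord5 q k)) ->
  (forall t1 t2 t3 t4 t5,
     Re (vf_apply (g_elt m1 m3 m4 t1 t2 t3 t4 t5) (defn F) (graph_pt F q)) = 0) ->
  partial5 F q 1 = 0 /\ partial5 F q 4 = 0 /\
  tangency_pde m1 m3 m4 x1 x2 y2 (F q) (partial5 F q 0) (partial5 F q 2) (partial5 F q 3).
Proof.
  intros q HD Htan.
  pose proof (Htan 1 0 0 0 0) as T1. pose proof (Htan 0 1 0 0 0) as T2.
  pose proof (Htan 0 0 1 0 0) as T3. pose proof (Htan 0 0 0 1 0) as T4.
  pose proof (Htan 0 0 0 0 1) as T5.
  rewrite Re_vf_apply, partial6_defn_graph_v, !partial6_defn_graph in T1, T2, T3, T4, T5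
    by (apply HD || lia).
  change (graph_pt F q) with (mkR6 x1 y1 x2 y2 u (F q)) in T1, T2, T3, T4, T5.
  rewrite vf_g_elt_z1, vf_g_elt_z2, vf_g_elt_w in T1, T2, T3, T4, T5.
  unfold Re, Im in T1, T2, T3, T4, T5. simpl in T1, T2, T3, T4, T5.
  assert (D1 : partial5 F q 1 = 0) by lra.
  assert (D4 : partial5 F q 4 = 0) by lra.
  rewrite D1, D4 in T1, T3, T4.
  unfold tangency_pde. repeat split; auto; lra.
Qed.

(** * A relative invariant of the system *)

Definition quadric (m1 m3 m4 x1 x2 y2 v : R) : R :=
  (2*x1 + m1*v)^2 + 2*(1 + m3*x2 + m4*y2)*(x2^2 + y2^2 - v).

(* Derivative of [quadric] along a curve with velocity (dx1, dx2, dy2, dv). *)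
Definition quadric_grad (m1 m3 m4 x1 x2 y2 v dx1 dx2 dy2 dv : R) : R :=
  let L := 1 + m3*x2 + m4*y2 in
  4*(2*x1 + m1*v) * dx1 + (2*m3*(x2^2 + y2^2 - v) + 4*L*x2) * dx2
  + (2*m4*(x2^2 + y2^2 - v) + 4*L*y2) * dy2 + (2*m1*(2*x1 + m1*v) - 2*L) * dv.

Section QuadricIdentities.
Variables (m1 m3 m4 x1 x2 y2 v D0 D2 D3 : R).
Hypothesis Hpde : tangency_pde m1 m3 m4 x1 x2 y2 v D0 D2 D3.
Let L := 1 + m3*x2 + m4*y2.

Lemma quadric_grad_x1 :
  quadric_grad m1 m3 m4 x1 x2 y2 v 1 0 0 D0 * L
  = 3 * (m3 * 0 + m4 * 0) * quadric m1 m3 m4 x1 x2 y2 v.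
Proof.
  destruct Hpde as (e1 & _ & _). unfold quadric_grad, L.
  replace (_ + _ + _ + _) with (-2 * ((1 + m3*x2 + m4*y2 - 2*m1*x1 - m1^2*v) * D0
                                     - (4*x1 + 2*m1*v))) by ring.
  rewrite e1. ring.
Qed.

(* The certificates eliminate D3 (resp. D2) between the last two equations. *)
Lemma quadric_grad_x2 :
  quadric_grad m1 m3 m4 x1 x2 y2 v 0 1 0 D2 * L
  = 3 * (m3 * 1 + m4 * 0) * quadric m1 m3 m4 x1 x2 y2 v.
Proof.
  destruct Hpde as (e1 & e3 & e4).
  set (C3 := 6*m3*x1 - 4*m1*x2 - m1*m3*v) in e3.
  set (C4 := 6*m4*x1 - 4*m1*y2 - m1*m4*v) in e4.
  apply Rminus_diag_uniq.
  transitivity ((m1*(2*x1 + m1*v) - L)/2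
      * ((1 + m4*y2) * (C3*D0 + 4*(1 + m3*x2)*D2 + 4*m3*y2*D3 - 8*(x2 + m3*v))
         - m3*y2 * (C4*D0 + 4*m4*x2*D2 + 4*(1 + m4*y2)*D3 - 8*(y2 + m4*v)))
    + ((1 + m4*y2)*C3 - m3*y2*C4)/2 * ((L - 2*m1*x1 - m1^2*v)*D0 - (4*x1 + 2*m1*v))).
  - unfold quadric_grad, quadric, L, C3, C4. field.
  - unfold L. rewrite e1, e3, e4. ring.
Qed.

Lemma quadric_grad_y2 :
  quadric_grad m1 m3 m4 x1 x2 y2 v 0 0 1 D3 * L
  = 3 * (m3 * 0 + m4 * 1) * quadric m1 m3 m4 x1 x2 y2 v.
Proof.
  destruct Hpde as (e1 & e3 & e4).
  set (C3 := 6*m3*x1 - 4*m1*x2 - m1*m3*v) in e3.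
  set (C4 := 6*m4*x1 - 4*m1*y2 - m1*m4*v) in e4.
  apply Rminus_diag_uniq.
  transitivity ((m1*(2*x1 + m1*v) - L)/2
      * ((1 + m3*x2) * (C4*D0 + 4*m4*x2*D2 + 4*(1 + m4*y2)*D3 - 8*(y2 + m4*v))
         - m4*x2 * (C3*D0 + 4*(1 + m3*x2)*D2 + 4*m3*y2*D3 - 8*(x2 + m3*v)))
    + ((1 + m3*x2)*C4 - m4*x2*C3)/2 * ((L - 2*m1*x1 - m1^2*v)*D0 - (4*x1 + 2*m1*v))).
  - unfold quadric_grad, quadric, L, C3, C4. field.
  - unfold L. rewrite e1, e3, e4. ring.
Qed.

End QuadricIdentities.

Lemma quadric_grad_0 m1 m3 m4 x1 x2 y2 v :
  quadric_grad m1 m3 m4 x1 x2 y2 v 0 0 0 0 * (1 + m3*x2 + m4*y2)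
  = 3 * (m3 * 0 + m4 * 0) * quadric m1 m3 m4 x1 x2 y2 v.
Proof. unfold quadric_grad. ring. Qed.

Lemma is_derive_div_cube (f l : R -> R) t df dl :
  is_derive f t df -> is_derive l t dl -> l t <> 0 -> df * l t = 3 * dl * f t ->
  is_derive (fun s => f s / l s ^ 3) t 0.
Proof.
  intros Hf Hl Hl0 H.
  replace 0 with ((df * l t ^ 3 - f t * (INR 3 * dl * l t ^ 2)) / (l t ^ 3) ^ 2).
  - apply is_derive_div; [exact Hf | apply is_derive_pow, Hl | now apply pow_nonzero].
  - replace (df * l t ^ 3 - f t * (INR 3 * dl * l t ^ 2))
      with (l t ^ 2 * (df * l t - 3 * dl * f t)) by (simpl; ring).
    rewrite H, Rminus_eq_0. unfold Rdiv. ring.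
Qed.

Definition invariant (m1 m3 m4 : R) (F : R5 -> R) (q : R5) : R :=
  quadric m1 m3 m4 (r5x1 q) (r5x2 q) (r5y2 q) (F q) / (1 + m3 * r5x2 q + m4 * r5y2 q) ^ 3.

Lemma is_derive_invariant_curve m1 m3 m4 (X1 X2 Y2 V : R -> R) t dx1 dx2 dy2 dv :
  is_derive X1 t dx1 -> is_derive X2 t dx2 -> is_derive Y2 t dy2 -> is_derive V t dv ->
  1 + m3 * X2 t + m4 * Y2 t <> 0 ->
  quadric_grad m1 m3 m4 (X1 t) (X2 t) (Y2 t) (V t) dx1 dx2 dy2 dv * (1 + m3 * X2 t + m4 * Y2 t)
  = 3 * (m3 * dx2 + m4 * dy2) * quadric m1 m3 m4 (X1 t) (X2 t) (Y2 t) (V t) ->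
  is_derive (fun s => quadric m1 m3 m4 (X1 s) (X2 s) (Y2 s) (V s)
                      / (1 + m3 * X2 s + m4 * Y2 s) ^ 3) t 0.
Proof.
  intros H1 H2 H3 HV HL H.
  assert (E1 : Derive (fun s => X1 s) t = dx1) by now apply is_derive_unique.
  assert (E2 : Derive (fun s => X2 s) t = dx2) by now apply is_derive_unique.
  assert (E3 : Derive (fun s => Y2 s) t = dy2) by now apply is_derive_unique.
  assert (E4 : Derive (fun s => V s) t = dv) by now apply is_derive_unique.
  eapply is_derive_div_cube; [| | exact HL | exact H].
  all: unfold quadric_grad, quadric; auto_derive;
    [repeat split; eexists; eassumption | rewrite ?E1, ?E2, ?E3, ?E4; ring].
Qed.

Section Invariance.
Variables (m1 m3 m4 : R) (F : R5 -> R) (c : coeffs) (r : R).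
Hypothesis HF : power_series_on c r F.
Hypothesis Htan : forall t1 t2 t3 t4 t5 q, in_polydisc r q ->
  Re (vf_apply (g_elt m1 m3 m4 t1 t2 t3 t4 t5) (defn F) (graph_pt F q)) = 0.

Lemma invariant_derive_line q k :
  in_polydisc r q -> 1 + m3 * r5x2 q + m4 * r5y2 q <> 0 ->
  is_derive (fun t => invariant m1 m3 m4 F (upd5 q k t)) (coord5 q k) 0.
Proof.
  intros Hq HL.
  assert (HD : forall k, ex_derive (fun t => F (upd5 q k t)) (coord5 q k))
    by (intros; eapply power_series_ex_derive_line; eauto).
  assert (HV : is_derive (fun t => F (upd5 q k t)) (coord5 q k) (partial5 F q k))
    by apply Derive_correct, HD.
  apply (is_derive_invariant_curve m1 m3 m4 (fun t => r5x1 (upd5 q k t))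
           (fun t => r5x2 (upd5 q k t)) (fun t => r5y2 (upd5 q k t)) (fun t => F (upd5 q k t))
           _ (if (k =? 0)%nat then 1 else 0) (if (k =? 2)%nat then 1 else 0)
           (if (k =? 3)%nat then 1 else 0) (partial5 F q k)); [| | | exact HV | |].
  1-4: destruct k as [|[|[|[|k]]]]; simpl; first [exact HL | auto_derive; reflexivity].
  destruct q as [x1 y1 x2 y2 u].
  destruct (tangency_pde_of_tangent m1 m3 m4 F x1 y1 x2 y2 u HD
              (fun t1 t2 t3 t4 t5 => Htan t1 t2 t3 t4 t5 _ Hq)) as (D1 & D4 & Hpde).
  destruct k as [|[|[|[|k]]]].
  - exact (quadric_grad_x1 _ _ _ _ _ _ _ _ _ _ Hpde).
  - simpl. rewrite D1. apply quadric_grad_0.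
  - exact (quadric_grad_x2 _ _ _ _ _ _ _ _ _ _ Hpde).
  - exact (quadric_grad_y2 _ _ _ _ _ _ _ _ _ _ Hpde).
  - simpl. change (partial5 F _ _) with (partial5 F (mkR5 x1 y1 x2 y2 u) 4).
    rewrite D4. apply quadric_grad_0.
Qed.
End Invariance.

Lemma derive_zero_eq (phi : R -> R) d a b :
  (forall t, Rabs t < d -> is_derive phi t 0) -> Rabs a < d -> Rabs b < d -> phi a = phi b.
Proof.
  intros Hd Ha Hb.
  assert (Hin : forall x, Rmin a b <= x <= Rmax a b -> Rabs x < d).
  { intros x Hx. apply Rabs_def2 in Ha. apply Rabs_def2 in Hb.
    unfold Rmin, Rmax in Hx. destruct (Rle_dec a b); apply Rabs_def1; lra. }
  destruct (MVT_gen phi a b (fun _ => 0)) as [x [_ Hx]]; [| | lra].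
  - intros x Hx. apply Hd, Hin. lra.
  - intros x Hx. apply continuity_pt_filterlim, (@ex_derive_continuous R_AbsRing R_NormedModule).
    exists 0. apply Hd, Hin, Hx.
Qed.

Lemma lin_part_small m3 m4 x2 y2 d :
  d * (Rabs m3 + Rabs m4) <= 1/2 -> Rabs x2 < d -> Rabs y2 < d -> Rabs (m3 * x2 + m4 * y2) <= 1/2.
Proof.
  intros Hm H2 H4. eapply Rle_trans; [apply Rabs_triang |]. rewrite !Rabs_mult.
  pose proof (Rmult_le_compat_l (Rabs m3) _ _ (Rabs_pos m3) (Rlt_le _ _ H2)).
  pose proof (Rmult_le_compat_l (Rabs m4) _ _ (Rabs_pos m4) (Rlt_le _ _ H4)).
  lra.
Qed.

Lemma lin_form_pos m3 m4 x2 y2 d :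
  d * (Rabs m3 + Rabs m4) <= 1/2 -> Rabs x2 < d -> Rabs y2 < d -> 0 < 1 + m3 * x2 + m4 * y2.
Proof.
  intros Hm H2 H4. pose proof (lin_part_small m3 m4 x2 y2 d Hm H2 H4) as H.
  apply Rabs_le_between in H. lra.
Qed.

Section Vanishing.
Variables (m1 m3 m4 : R) (F : R5 -> R) (c : coeffs) (r d : R).
Hypothesis HF : power_series_on c r F.
Hypothesis Hn : normalized c.
Hypothesis Htan : forall t1 t2 t3 t4 t5 q, in_polydisc r q ->
  Re (vf_apply (g_elt m1 m3 m4 t1 t2 t3 t4 t5) (defn F) (graph_pt F q)) = 0.
Hypothesis Hd : 0 < d.
Hypothesis Hdr : d <= r.
Hypothesis Hdm : d * (Rabs m3 + Rabs m4) <= 1/2.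

Lemma invariant_line_const q k a b :
  in_polydisc d q -> Rabs a < d -> Rabs b < d ->
  invariant m1 m3 m4 F (upd5 q k a) = invariant m1 m3 m4 F (upd5 q k b).
Proof.
  intros Hq Ha Hb. apply (derive_zero_eq (fun t => invariant m1 m3 m4 F (upd5 q k t)) d); auto.
  intros t Ht.
  assert (Hqt : in_polydisc d (upd5 q k t)) by now apply in_polydisc_upd5.
  pose proof (invariant_derive_line m1 m3 m4 F c r HF Htan (upd5 q k t) k) as H.
  rewrite coord5_upd5 in H.
  apply (is_derive_ext (fun s => invariant m1 m3 m4 F (upd5 (upd5 q k t) k s)));
    [intros s; now rewrite upd5_upd5 |].
  apply H.
  - destruct Hqt as (? & ? & ? & ? & ?). unfold in_polydisc; repeat split; lra.
  - destruct Hqt as (_ & _ & H2 & H4 & _).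
    pose proof (lin_form_pos m3 m4 _ _ d Hdm H2 H4). lra.
Qed.

Lemma invariant_eq_origin q :
  in_polydisc d q -> invariant m1 m3 m4 F q = invariant m1 m3 m4 F (mkR5 0 0 0 0 0).
Proof.
  destruct q as [x1 y1 x2 y2 u]. intros (B1 & B2 & B3 & B4 & B5); simpl in *.
  assert (Z : Rabs 0 < d) by (rewrite Rabs_R0; lra).
  transitivity (invariant m1 m3 m4 F (mkR5 x1 y1 x2 y2 0));
    [apply (invariant_line_const (mkR5 x1 y1 x2 y2 0) 4); unfold in_polydisc; simpl; auto |].
  transitivity (invariant m1 m3 m4 F (mkR5 x1 0 x2 y2 0));
    [apply (invariant_line_const (mkR5 x1 0 x2 y2 0) 1); unfold in_polydisc; simpl; auto |].
  transitivity (invariant m1 m3 m4 F (mkR5 0 0 x2 y2 0));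
    [apply (invariant_line_const (mkR5 0 0 x2 y2 0) 0); unfold in_polydisc; simpl; auto |].
  transitivity (invariant m1 m3 m4 F (mkR5 0 0 0 y2 0));
    [apply (invariant_line_const (mkR5 0 0 0 y2 0) 2); unfold in_polydisc; simpl; auto |].
  apply (invariant_line_const (mkR5 0 0 0 0 0) 3); unfold in_polydisc; simpl; auto.
Qed.

Lemma quadric_vanishes_on_graph q :
  in_polydisc d q -> quadric m1 m3 m4 (r5x1 q) (r5x2 q) (r5y2 q) (F q) = 0.
Proof.
  intros Hq.
  pose proof (invariant_eq_origin q Hq) as H.
  unfold invariant in H at 2. simpl in H.
  rewrite (normalized_power_series_0 c r F HF Hn ltac:(lra)) in H.
  replace (quadric m1 m3 m4 0 0 0 0 / _) with 0 in H by (unfold quadric; field).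
  unfold invariant in H.
  destruct Hq as (_ & _ & H2 & H4 & _).
  pose proof (lin_form_pos m3 m4 _ _ d Hdm H2 H4).
  replace 0 with (0 * (1 + m3 * r5x2 q + m4 * r5y2 q) ^ 3) by ring.
  rewrite <- H. field. lra.
Qed.

End Vanishing.

(** * Near the origin the graph is the zero set of the quadric *)

Lemma quadric_root_unique m1 m3 m4 x1 x2 y2 v w :
  Rabs (m3 * x2 + m4 * y2) <= 1/2 -> 4 * Rabs m1 * Rabs x1 + m1^2 * (Rabs v + Rabs w) < 1 ->
  quadric m1 m3 m4 x1 x2 y2 v = 0 -> quadric m1 m3 m4 x1 x2 y2 w = 0 -> v = w.
Proof.
  intros HL Hb Hv Hw.
  assert (E : quadric m1 m3 m4 x1 x2 y2 v - quadric m1 m3 m4 x1 x2 y2 w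
              = (v - w) * (4*m1*x1 + m1^2*(v + w) - 2*(1 + m3*x2 + m4*y2)))
    by (unfold quadric; ring).
  rewrite Hv, Hw, Rminus_0_r in E.
  assert (Hneg : 4*m1*x1 + m1^2*(v + w) - 2*(1 + m3*x2 + m4*y2) < 0).
  { apply Rabs_le_between in HL.
    assert (m1 * x1 <= Rabs m1 * Rabs x1) by (rewrite <- Rabs_mult; apply Rle_abs).
    assert (m1^2 * (v + w) <= m1^2 * (Rabs v + Rabs w)).
    { apply Rmult_le_compat_l; [apply pow2_ge_0 |].
      pose proof (Rle_abs v); pose proof (Rle_abs w); lra. }
    lra. }
  symmetry in E. apply Rmult_integral in E as [E | E]; lra.
Qed.

(* The last bound is the smallness hypothesis of [quadric_root_unique]. *)
Lemma graph_radius m1 m3 m4 (c : coeffs) r F :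
  power_series_on c r F -> normalized c -> 0 < r ->
  exists d, 0 < d <= r /\ d * (Rabs m3 + Rabs m4) <= 1/2 /\
    forall q v, in_polydisc d q -> Rabs v < d ->
      4 * Rabs m1 * Rabs (r5x1 q) + m1^2 * (Rabs v + Rabs (F q)) < 1.
Proof.
  intros HF Hn Hr.
  set (rho := r / 2). set (K := Rabs (Series (majorant_seq c rho))).
  set (M := 4 * Rabs m1 + m1^2 + m1^2 * K / rho + Rabs m3 + Rabs m4 + 1).
  assert (Hrho : 0 < rho) by (unfold rho; lra).
  assert (HK : 0 <= m1^2 * K / rho)
    by (apply Rdiv_le_0_compat; [apply Rmult_le_pos; [apply pow2_ge_0 | apply Rabs_pos] | lra]).
  pose proof (Rabs_pos m1). pose proof (Rabs_pos m3). pose proof (Rabs_pos m4).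
  pose proof (pow2_ge_0 m1).
  set (d := Rmin rho (/ (2 * M))).
  assert (Hd : 0 < d) by (apply Rmin_pos; [lra | apply Rinv_0_lt_compat; unfold M; lra]).
  assert (Hdrho : d <= rho) by apply Rmin_l.
  assert (HdM : d * M <= 1/2).
  { apply Rle_trans with (/ (2 * M) * M);
      [apply Rmult_le_compat_r; [unfold M; lra | apply Rmin_r] | right; field; unfold M; lra]. }
  assert (HdM' : d * M = d * (4 * Rabs m1 + m1^2 + m1^2 * (K / rho)) + d * (Rabs m3 + Rabs m4) + d)
    by (unfold M, Rdiv; ring).
  exists d. split; [unfold rho in *; lra |]. split; [nra |].
  intros q v Hq Hv.
  assert (Hcube : in_cube d q) by (destruct Hq as (? & ? & ? & ? & ?); repeat split; lra).
  pose proof (normalized_power_series_linear_bound c r F HF q d rho Hn Hcube ltac:(lra)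
                ltac:(unfold rho; lra)) as HFq. fold K in HFq.
  destruct Hq as (B1 & _).
  assert (Rabs m1 * Rabs (r5x1 q) <= Rabs m1 * d) by (apply Rmult_le_compat_l; lra).
  assert (m1^2 * (Rabs v + Rabs (F q)) <= m1^2 * (d + d / rho * K))
    by (apply Rmult_le_compat_l; lra).
  assert (d * (m1^2 * (K / rho)) = m1^2 * (d / rho * K)) by (unfold Rdiv; ring).
  nra.
Qed.

Definition aff (L : nat -> nat -> C) (b : nat -> C) (zeta : C3) : C3 :=
  mkC3 (L 0%nat 0%nat * z1c zeta + L 0%nat 1%nat * z2c zeta + L 0%nat 2%nat * wc zeta + b 0%nat)%C
       (L 1%nat 0%nat * z1c zeta + L 1%nat 1%nat * z2c zeta + L 1%nat 2%nat * wc zeta + b 1%nat)%C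
       (L 2%nat 0%nat * z1c zeta + L 2%nat 1%nat * z2c zeta + L 2%nat 2%nat * wc zeta + b 2%nat)%C.

Definition box (d : R) (zeta : C3) : Prop :=
  Rabs (Re (z1c zeta)) < d /\ Rabs (Im (z1c zeta)) < d /\
  Rabs (Re (z2c zeta)) < d /\ Rabs (Im (z2c zeta)) < d /\
  Rabs (Re (wc zeta)) < d /\ Rabs (Im (wc zeta)) < d.

Lemma im_le_Cmod z : Rabs (Im z) <= Cmod z.
Proof.
  destruct z as [a b]. unfold Cmod, Im; simpl. rewrite <- sqrt_Rsqr_abs.
  apply sqrt_le_1; [apply Rle_0_sqr | nra | unfold Rsqr; nra].
Qed.

Lemma Rabs_coord_le z z' e : Cmod (z - z') <= e ->
  Rabs (Re z') <= Rabs (Re z) + e /\ Rabs (Im z') <= Rabs (Im z) + e.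
Proof.
  intros H. pose proof (re_le_Cmod (z - z')). pose proof (im_le_Cmod (z - z')).
  destruct z as [a b], z' as [a' b']. unfold Re, Im in *; simpl in *.
  change (a + - a') with (a - a') in *. change (b + - b') with (b - b') in *.
  pose proof (Rabs_triang_inv a' a). pose proof (Rabs_triang_inv b' b).
  rewrite (Rabs_minus_sym a'), (Rabs_minus_sym b') in *.
  split; lra.
Qed.

Lemma Cmod_le_dist3 a b :
  Cmod (z1c a - z1c b) <= dist3 a b /\ Cmod (z2c a - z2c b) <= dist3 a b /\
  Cmod (wc a - wc b) <= dist3 a b.
Proof.
  unfold dist3. split; [apply Rmax_l |].
  split; (eapply Rle_trans; [| apply Rmax_r]); [apply Rmax_l | apply Rmax_r].
Qed.

Lemma dist3_ge_0 a b : 0 <= dist3 a b.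
Proof. eapply Rle_trans; [apply Cmod_ge_0 | apply (Cmod_le_dist3 a b)]. Qed.

Lemma open_box d : open3 (box d).
Proof.
  intros a (A1 & A2 & A3 & A4 & A5 & A6).
  set (e := Rmin (d - Rabs (Re (z1c a))) (Rmin (d - Rabs (Im (z1c a)))
           (Rmin (d - Rabs (Re (z2c a))) (Rmin (d - Rabs (Im (z2c a)))
           (Rmin (d - Rabs (Re (wc a))) (d - Rabs (Im (wc a)))))))).
  assert (He : 0 < e) by (unfold e; repeat apply Rmin_pos; lra).
  assert (E : e <= d - Rabs (Re (z1c a)) /\ e <= d - Rabs (Im (z1c a)) /\
              e <= d - Rabs (Re (z2c a)) /\ e <= d - Rabs (Im (z2c a)) /\
              e <= d - Rabs (Re (wc a)) /\ e <= d - Rabs (Im (wc a)))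
    by (unfold e; repeat split;
        repeat (apply Rle_refl || apply Rmin_l || (eapply Rle_trans; [apply Rmin_r |]))).
  exists e. split; [exact He |]. intros b Hb.
  destruct (Cmod_le_dist3 a b) as (C1 & C2 & C3).
  destruct (Rabs_coord_le _ _ _ C1), (Rabs_coord_le _ _ _ C2), (Rabs_coord_le _ _ _ C3).
  unfold box; repeat split; lra.
Qed.

Lemma Cmod_lin3_le (l0 l1 l2 b0 : C) x y :
  Cmod ((l0 * z1c x + l1 * z2c x + l2 * wc x + b0) - (l0 * z1c y + l1 * z2c y + l2 * wc y + b0))%C
  <= (Cmod l0 + Cmod l1 + Cmod l2) * dist3 x y.
Proof.
  replace (_ - _)%C
    with (l0 * (z1c x - z1c y) + l1 * (z2c x - z2c y) + l2 * (wc x - wc y))%C by ring.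
  eapply Rle_trans; [apply Cmod_triangle |].
  eapply Rle_trans; [apply Rplus_le_compat_r, Cmod_triangle |].
  rewrite !Cmod_mult. destruct (Cmod_le_dist3 x y) as (C1 & C2 & C3).
  pose proof (Rmult_le_compat_l _ _ _ (Cmod_ge_0 l0) C1).
  pose proof (Rmult_le_compat_l _ _ _ (Cmod_ge_0 l1) C2).
  pose proof (Rmult_le_compat_l _ _ _ (Cmod_ge_0 l2) C3).
  lra.
Qed.

Lemma aff_lipschitz L b :
  exists K, forall x y, dist3 (aff L b x) (aff L b y) <= K * dist3 x y.
Proof.
  set (K i := Cmod (L i 0%nat) + Cmod (L i 1%nat) + Cmod (L i 2%nat)).
  assert (HK : forall i, 0 <= K i)
    by (intros; unfold K; repeat apply Rplus_le_le_0_compat; apply Cmod_ge_0).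
  exists (K 0%nat + K 1%nat + K 2%nat). intros x y.
  pose proof (dist3_ge_0 x y). pose proof (HK 0%nat). pose proof (HK 1%nat). pose proof (HK 2%nat).
  assert (Hrow : forall i, (i < 3)%nat ->
                   K i * dist3 x y <= (K 0%nat + K 1%nat + K 2%nat) * dist3 x y)
    by (intros i Hi; apply Rmult_le_compat_r; [lra |]; destruct i as [|[|[|i]]]; lra || lia).
  unfold dist3 at 1, aff; simpl.
  repeat apply Rmax_lub; eapply Rle_trans; try apply Cmod_lin3_le;
    [apply (Hrow 0%nat) | apply (Hrow 1%nat) | apply (Hrow 2%nat)]; lia.
Qed.

Lemma open3_preimage_lipschitz (U : C3 -> Prop) (f : C3 -> C3) K :
  open3 U -> (forall x y, dist3 (f x) (f y) <= K * dist3 x y) -> open3 (fun x => U (f x)).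
Proof.
  intros HU Hf a Ha. destruct (HU (f a) Ha) as [e [He H]].
  assert (HK : 0 < Rabs K + 1) by (pose proof (Rabs_pos K); lra).
  exists (e / (Rabs K + 1)). split; [now apply Rdiv_lt_0_compat |].
  intros b Hb. apply H.
  pose proof (dist3_ge_0 a b).
  apply Rle_lt_trans with (Rabs K * dist3 a b).
  - eapply Rle_trans; [apply Hf |]. apply Rmult_le_compat_r; [lra | apply Rle_abs].
  - apply Rle_lt_trans with ((Rabs K + 1) * dist3 a b); [nra |].
    apply (Rmult_lt_compat_l (Rabs K + 1)) in Hb; [| lra].
    replace ((Rabs K + 1) * (e / (Rabs K + 1))) with e in Hb by (field; lra). lra.
Qed.

Definition zero3 : nat -> C := fun _ => RtoC 0.

Lemma box_polydisc d x1 y1 x2 y2 u v :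
  box d (mkC3 (x1, y1) (x2, y2) (u, v)) -> in_polydisc d (mkR5 x1 y1 x2 y2 u) /\ Rabs v < d.
Proof. intros (? & ? & ? & ? & ? & ?). unfold in_polydisc; simpl in *; tauto. Qed.

Lemma affinely_equiv_germ_of_zero_set m1 m3 m4 (F : R5 -> R) r d (L Li : nat -> nat -> C)
    (S : C3 -> Prop) :
  0 < d -> d <= r ->
  (forall q, in_polydisc d q -> quadric m1 m3 m4 (r5x1 q) (r5x2 q) (r5y2 q) (F q) = 0) ->
  (forall q v, in_polydisc d q -> Rabs v < d ->
     quadric m1 m3 m4 (r5x1 q) (r5x2 q) (r5y2 q) v = 0 -> v = F q) ->
  (forall x1 y1 x2 y2 u v, box d (mkC3 (x1, y1) (x2, y2) (u, v)) ->
     S (aff L zero3 (mkC3 (x1, y1) (x2, y2) (u, v))) <-> quadric m1 m3 m4 x1 x2 y2 v = 0) ->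
  (forall zeta, aff Li zero3 (aff L zero3 zeta) = zeta) ->
  (forall zeta, aff L zero3 (aff Li zero3 zeta) = zeta) ->
  affinely_equiv_germ (hyp F r) S.
Proof.
  intros Hd Hdr Hvan Huniq HS HLi HL.
  destruct (aff_lipschitz Li zero3) as [K HK].
  exists (aff L zero3), (box d), (fun eta => box d (aff Li zero3 eta)).
  split; [| split; [apply open_box | split; [| split]]].
  - split; [now exists L, zero3 | now exists (aff Li zero3)].
  - unfold box, C3_zero; simpl. rewrite Rabs_R0. repeat split; lra.
  - exact (open3_preimage_lipschitz _ _ K (open_box d) HK).
  - intros eta. split.
    + intros [zeta [[q [Hq ->]] [Hbox ->]]].
      destruct q as [x1 y1 x2 y2 u]. unfold C3_of_R6, graph_pt in *; simpl in *.
      rewrite HLi. split; [| exact Hbox].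
      apply HS; [exact Hbox |].
      apply (Hvan (mkR5 x1 y1 x2 y2 u)), (box_polydisc _ _ _ _ _ _ _ Hbox).
    + intros [HSe Hbox].
      rewrite <- (HL eta) in HSe |- *.
      destruct (aff Li zero3 eta) as [[x1 y1] [x2 y2] [u v]].
      apply HS in HSe; [| exact Hbox].
      destruct (box_polydisc _ _ _ _ _ _ _ Hbox) as [Hq Hv].
      rewrite (Huniq _ v Hq Hv HSe).
      exists (mkC3 (x1, y1) (x2, y2) (u, F (mkR5 x1 y1 x2 y2 u))).
      split; [| split; [rewrite <- (Huniq _ v Hq Hv HSe); exact Hbox | reflexivity]].
      exists (mkR5 x1 y1 x2 y2 u). split; [| reflexivity].
      destruct Hq as (? & ? & ? & ? & ?). unfold in_polydisc; simpl in *; repeat split; lra.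
Qed.

(** * The two normal forms *)

Definition L1 (m1 : R) : nat -> nat -> C := fun i j =>
  match i, j with
  | 0%nat, 0%nat => RtoC 1 | 0%nat, 2%nat => (0, - (m1 / 2))
  | 1%nat, 1%nat => RtoC 1 | 2%nat, 2%nat => RtoC 1 | _, _ => RtoC 0 end.

Definition L1inv (m1 : R) : nat -> nat -> C := fun i j =>
  match i, j with
  | 0%nat, 0%nat => RtoC 1 | 0%nat, 2%nat => (0, m1 / 2)
  | 1%nat, 1%nat => RtoC 1 | 2%nat, 2%nat => RtoC 1 | _, _ => RtoC 0 end.

Lemma L1inv_L1 m1 zeta : aff (L1inv m1) zero3 (aff (L1 m1) zero3 zeta) = zeta.
Proof.
  destruct zeta as [[a b] [c d] [e f]]. unfold aff, L1, L1inv, zero3; simpl.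
  unfold Cmult, Cplus, RtoC; simpl. f_equal; f_equal; field.
Qed.

Lemma L1_L1inv m1 zeta : aff (L1 m1) zero3 (aff (L1inv m1) zero3 zeta) = zeta.
Proof.
  destruct zeta as [[a b] [c d] [e f]]. unfold aff, L1, L1inv, zero3; simpl.
  unfold Cmult, Cplus, RtoC; simpl. f_equal; f_equal; field.
Qed.

Lemma model1_L1 m1 x1 y1 x2 y2 u v :
  model1 (aff (L1 m1) zero3 (mkC3 (x1, y1) (x2, y2) (u, v))) <-> quadric m1 0 0 x1 x2 y2 v = 0.
Proof.
  unfold model1. rewrite Cmod2_alt. unfold aff, L1, zero3; simpl.
  unfold Cmult, Cplus, RtoC, Re, Im; simpl. unfold quadric. split; intros; nra.
Qed.

Section Model2.
Variables (m1 m3 m4 : R).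
Let s2 := m3 ^ 2 + m4 ^ 2.
Let r0 := sqrt s2.
Hypothesis Hs2 : s2 <> 0.

Definition L2 : nat -> nat -> C := fun i j =>
  match i, j with
  | 0%nat, 0%nat => RtoC (2 * r0) | 0%nat, 2%nat => (0, - (r0 * m1))
  | 1%nat, 1%nat => (- m3, m4) | 2%nat, 2%nat => RtoC (2 * s2) | _, _ => RtoC 0 end.

Definition L2inv : nat -> nat -> C := fun i j =>
  match i, j with
  | 0%nat, 0%nat => RtoC (1 / (2 * r0)) | 0%nat, 2%nat => (0, m1 / (4 * s2))
  | 1%nat, 1%nat => (- m3 / s2, - m4 / s2) | 2%nat, 2%nat => RtoC (1 / (2 * s2))
  | _, _ => RtoC 0 end.

Lemma r0_pos : 0 < r0.
Proof.
  apply sqrt_lt_R0. pose proof (pow2_ge_0 m3). pose proof (pow2_ge_0 m4).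
  unfold s2 in *. lra.
Qed.

Lemma L2inv_L2 zeta : aff L2inv zero3 (aff L2 zero3 zeta) = zeta.
Proof.
  pose proof r0_pos. destruct zeta as [[a b] [c d] [e f]]. unfold aff, L2, L2inv, zero3; simpl.
  unfold Cmult, Cplus, RtoC; simpl. unfold s2 in *. f_equal; f_equal; field; lra.
Qed.

Lemma L2_L2inv zeta : aff L2 zero3 (aff L2inv zero3 zeta) = zeta.
Proof.
  pose proof r0_pos. destruct zeta as [[a b] [c d] [e f]]. unfold aff, L2, L2inv, zero3; simpl.
  unfold Cmult, Cplus, RtoC; simpl. unfold s2 in *. f_equal; f_equal; field; lra.
Qed.

(* z1 -> r0 (2 z1 - i m1 w), z2 -> (-m3 + i m4) z2, w -> 2 s2 w turns quadric = 0
   into model 2, with 1 - Re z2' = 1 + m3 x2 + m4 y2. *)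
Lemma model2_L2 x1 y1 x2 y2 u v :
  0 < 1 + m3 * x2 + m4 * y2 ->
  model2 (aff L2 zero3 (mkC3 (x1, y1) (x2, y2) (u, v))) <-> quadric m1 m3 m4 x1 x2 y2 v = 0.
Proof.
  intros HL.
  assert (Hr2 : r0 ^ 2 = s2)
    by (unfold r0; rewrite pow2_sqrt; [reflexivity | unfold s2; nra]).
  set (zeta := aff L2 zero3 (mkC3 (x1, y1) (x2, y2) (u, v))).
  assert (E1 : Re (z1c zeta) = r0 * (2 * x1 + m1 * v))
    by (unfold zeta, aff, L2, zero3, Re; simpl; ring).
  assert (E2 : Re (z2c zeta) = - (m3 * x2 + m4 * y2))
    by (unfold zeta, aff, L2, zero3, Re; simpl; ring).
  assert (E3 : Cmod (z2c zeta) ^ 2 = s2 * (x2 ^ 2 + y2 ^ 2))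
    by (rewrite Cmod2_alt; unfold zeta, aff, L2, zero3, Re, Im, s2; simpl; ring).
  assert (E4 : Im (wc zeta) = 2 * s2 * v)
    by (unfold zeta, aff, L2, zero3, Im; simpl; ring).
  assert (Key : Im (wc zeta) - (Re (z1c zeta) ^ 2 / (1 - Re (z2c zeta)) + 2 * Cmod (z2c zeta) ^ 2)
                = - s2 * quadric m1 m3 m4 x1 x2 y2 v / (1 + m3 * x2 + m4 * y2)).
  { rewrite E1, E2, E3, E4, Rpow_mult_distr, Hr2. unfold quadric. field. lra. }
  unfold model2. fold zeta. split.
  - intros [_ H]. rewrite H, Rminus_eq_0 in Key.
    symmetry in Key. unfold Rdiv in Key.
    apply Rmult_integral in Key as [Key | Key].
    + apply Rmult_integral in Key as [Key | Key]; [unfold s2 in *; lra | exact Key].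
    + exfalso. apply (Rinv_neq_0_compat (1 + m3 * x2 + m4 * y2)); [lra | exact Key].
  - intros H. split; [rewrite E2; lra |].
    rewrite H, Rmult_0_r in Key. unfold Rdiv in Key. rewrite Rmult_0_l in Key. lra.
Qed.

End Model2.

Theorem theorem4p6 (m1 m3 m4 : R) (F : R5 -> R) (r : R) :
  integral_variety m1 m3 m4 F r ->
  affinely_equiv_germ (hyp F r) model1 \/ affinely_equiv_germ (hyp F r) model2.
Proof.
  intros [Hr [[c [HF Hn]] Htan]].
  destruct (graph_radius m1 m3 m4 c r F HF Hn Hr) as (d & [Hd Hdr] & Hdm & Hsmall).
  pose proof (quadric_vanishes_on_graph m1 m3 m4 F c r d HF Hn Htan Hd Hdr Hdm) as Hvan.
  assert (Huniq : forall q v, in_polydisc d q -> Rabs v < d ->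
            quadric m1 m3 m4 (r5x1 q) (r5x2 q) (r5y2 q) v = 0 -> v = F q).
  { intros q v Hq Hv Hqv. pose proof Hq as (_ & _ & H2 & H4 & _).
    apply (quadric_root_unique m1 m3 m4 (r5x1 q) (r5x2 q) (r5y2 q));
      [exact (lin_part_small m3 m4 _ _ d Hdm H2 H4) | now apply Hsmall
      | exact Hqv | now apply Hvan]. }
  destruct (Req_dec (m3 ^ 2 + m4 ^ 2) 0) as [H0 | H0].
  - left. assert (m3 = 0) by nra. assert (m4 = 0) by nra. subst m3 m4.
    apply (affinely_equiv_germ_of_zero_set m1 0 0 F r d (L1 m1) (L1inv m1));
      auto using L1inv_L1, L1_L1inv.
    intros. apply model1_L1.
  - right.
    apply (affinely_equiv_germ_of_zero_set m1 m3 m4 F r d (L2 m1 m3 m4) (L2inv m1 m3 m4));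
      auto using L2inv_L2, L2_L2inv.
    intros x1 y1 x2 y2 u v Hbox. apply model2_L2; [exact H0 |].
    destruct (box_polydisc _ _ _ _ _ _ _ Hbox) as [(_ & _ & H2 & H4 & _) _].
    exact (lin_form_pos m3 m4 _ _ d Hdm H2 H4).
Qed.
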